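(* Let $M=\begin{pmatrix}A&B\\ C&D\end{pmatrix}$ be an operator matrix on $X\oplus Y$, where $A\in\mathcal{L}(X)$ and $D\in\mathcal{L}(Y)$ have g-Drazin inverses, $B\in\mathcal{L}(Y,X)$, $C\in\mathcal{L}(X,Y)$. If $ABC=0$, $CBC=0$, $DCA=0$ and $DCB=0$, then $M$ has a g-Drazin inverse in $\mathcal{L}(X\oplus Y)$.
   Context: $X,Y$ are complex Banach spaces; $\mathcal{L}(X)$ denotes the Banach algebra of bounded linear operators on $X$, and $\mathcal{L}(Y,X)$ the bounded operators from $Y$ to $X$. An element $a$ of a unital Banach algebra $\mathcal{A}$ is quasinilpotent if $\lim_{n\to\infty}\|a^n\|^{1/n}=0$. An element $a\in\mathcal{A}$ has a g-Drazin (generalized Drazin) inverse if there exists $x\in\mathcal{A}$ with $x=xax$, $ax=xa$, and $a-a^2x$ quasinilpotent; such $x$ is unique and is denoted $a^d$. *)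

From Stdlib Require Import Reals.
Open Scope R_scope.

Definition Cx : Type := (R * R)%type.
Definition Cx0 : Cx := (0, 0).
Definition Cx1 : Cx := (1, 0).
Definition Cxplus (a b : Cx) : Cx := (fst a + fst b, snd a + snd b).
Definition Cxmult (a b : Cx) : Cx :=
  (fst a * fst b - snd a * snd b, fst a * snd b + snd a * fst b).
Definition Cxmod (a : Cx) : R := sqrt (fst a ^ 2 + snd a ^ 2).

Record NS := {
  car :> Type;
  nzero : car;
  nadd : car -> car -> car;
  nopp : car -> car;
  nscal : Cx -> car -> car;
  nnorm : car -> R }.

Arguments nzero {_}.
Arguments nadd {_} _ _.
Arguments nopp {_} _.
Arguments nscal {_} _ _.
Arguments nnorm {_} _.

Definition nsub {V : NS} (x y : V) : V := nadd x (nopp y).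

Definition is_cbanach (V : NS) : Prop :=
  (forall x y z : V, nadd x (nadd y z) = nadd (nadd x y) z) /\
  (forall x y : V, nadd x y = nadd y x) /\
  (forall x : V, nadd x nzero = x) /\
  (forall x : V, nadd x (nopp x) = nzero) /\
  (forall (a b : Cx) (x : V), nscal a (nscal b x) = nscal (Cxmult a b) x) /\
  (forall x : V, nscal Cx1 x = x) /\
  (forall (a : Cx) (x y : V), nscal a (nadd x y) = nadd (nscal a x) (nscal a y)) /\
  (forall (a b : Cx) (x : V), nscal (Cxplus a b) x = nadd (nscal a x) (nscal b x)) /\
  (forall x : V, 0 <= nnorm x) /\
  (forall x : V, nnorm x = 0 -> x = nzero) /\
  (forall (a : Cx) (x : V), nnorm (nscal a x) = Cxmod a * nnorm x) /\
  (forall x y : V, nnorm (nadd x y) <= nnorm x + nnorm y) /\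
  (forall u : nat -> V,
     (forall eps, 0 < eps -> exists N, forall m n, (N <= m)%nat -> (N <= n)%nat ->
        nnorm (nsub (u m) (u n)) < eps) ->
     exists l : V, forall eps, 0 < eps -> exists N, forall n, (N <= n)%nat ->
        nnorm (nsub (u n) l) < eps).

Definition is_blin (V W : NS) (f : V -> W) : Prop :=
  (forall x y : V, f (nadd x y) = nadd (f x) (f y)) /\
  (forall (a : Cx) (x : V), f (nscal a x) = nscal a (f x)) /\
  (exists c, forall x : V, nnorm (f x) <= c * nnorm x).

(* lim ||T^n||^(1/n) = 0, written out: for every eps > 0, eventually
   ||T^n|| < eps^n, i.e. T^n admits an operator bound c < eps^n. *)
Definition quasinilpotent (V : NS) (T : V -> V) : Prop :=
  forall eps, 0 < eps -> exists N : nat, forall n : nat, (N <= n)%nat ->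
    exists c, c < eps ^ n /\ forall x : V, nnorm (Nat.iter n T x) <= c * nnorm x.

Definition has_gdrazin (V : NS) (a : V -> V) : Prop :=
  exists x : V -> V, is_blin V V x /\
    (forall v, x (a (x v)) = x v) /\
    (forall v, a (x v) = x (a v)) /\
    quasinilpotent V (fun v => nsub (a v) (a (a (x v)))).

Definition prodNS (X Y : NS) : NS := {|
  car := (car X * car Y)%type;
  nzero := (nzero, nzero);
  nadd := fun p q => (nadd (fst p) (fst q), nadd (snd p) (snd q));
  nopp := fun p => (nopp (fst p), nopp (snd p));
  nscal := fun a p => (nscal a (fst p), nscal a (snd p));
  nnorm := fun p => nnorm (fst p) + nnorm (snd p) |}.

Definition opmat {X Y : NS} (A : X -> X) (B : Y -> X) (C : X -> Y) (D : Y -> Y)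
  : prodNS X Y -> prodNS X Y :=
  fun p => (nadd (A (fst p)) (B (snd p)), nadd (C (fst p)) (D (snd p))).

(* Structure of the proof.
   - Quasinilpotence of a bounded operator is recast as uniform geometric
     decay: for every r > 0, ||T^n x|| <= K r^n ||x|| (geom_decay).
   - General tools for g-Drazin invertibility: nilpotent operators; Cline's
     formula (if g f has a g-Drazin inverse, so has f g); invariance under a
     retraction (change of coordinates).
   - Lower triangular operators [[A, 0], [C, D]] have a g-Drazin inverse
     when A and D do (gd_lowtri).  The inverse is [[A^d, 0], [S, D^d]], where
     S is built from two convergent series solving Sylvester equations
     Z = H + F Z G; the quasinilpotent part is triangular with quasinilpotent
     diagonal, hence quasinilpotent.
   - Consequently a + b has a g-Drazin inverse when a and b do and ab = 0,
     and, by Cline's formula, p + q has one when q and the block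
     [[0, qp], [1, p]] do and q^2 p = 0 (gd_add_of_sq_mul_zero).
   - The theorem: M = [[A, B], [0, 0]] + [[0, 0], [C, D]] with q^2 p = 0 by
     DCA = DCB = 0.  The attached block factors through (X (+) Y) (+) X and
     becomes triangular with diagonal entries 0 and [[0, C], [B, A]], which is
     [[A, B], [C, 0]] up to a swap; the latter is again of the form p + q
     with q^2 p = 0 (ABC = 0) and a nilpotent block (CBC = 0). *)

From Stdlib Require Import Reals Lra Lia Psatz Arith.
From Stdlib Require Import FunctionalExtensionality ClassicalEpsilon.
Open Scope R_scope.

(* Being a complex Banach space, as a type class so that the axioms of
   is_cbanach are found automatically (also for product spaces). *)
Class Ban (V : NS) : Prop := ban : is_cbanach V.

Section VectorSpace.
Context {V : NS} {HV : Ban V}.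
Implicit Types x y z : V.

Lemma addA x y z : nadd x (nadd y z) = nadd (nadd x y) z.
Proof. destruct HV as (h&_); apply h. Qed.
Lemma addC x y : nadd x y = nadd y x.
Proof. destruct HV as (_&h&_); apply h. Qed.
Lemma add0 x : nadd x nzero = x.
Proof. destruct HV as (_&_&h&_); apply h. Qed.
Lemma addN x : nadd x (nopp x) = nzero.
Proof. destruct HV as (_&_&_&h&_); apply h. Qed.
Lemma scalA a b x : nscal a (nscal b x) = nscal (Cxmult a b) x.
Proof. destruct HV as (_&_&_&_&h&_); apply h. Qed.
Lemma scal1 x : nscal Cx1 x = x.
Proof. destruct HV as (_&_&_&_&_&h&_); apply h. Qed.
Lemma scalDr a x y : nscal a (nadd x y) = nadd (nscal a x) (nscal a y).
Proof. destruct HV as (_&_&_&_&_&_&h&_); apply h. Qed.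
Lemma scalDl a b x : nscal (Cxplus a b) x = nadd (nscal a x) (nscal b x).
Proof. destruct HV as (_&_&_&_&_&_&_&h&_); apply h. Qed.
Lemma norm_ge0 x : 0 <= nnorm x.
Proof. destruct HV as (_&_&_&_&_&_&_&_&h&_); apply h. Qed.
Lemma norm_eq0 x : nnorm x = 0 -> x = nzero.
Proof. destruct HV as (_&_&_&_&_&_&_&_&_&h&_); apply h. Qed.
Lemma norm_scal a x : nnorm (nscal a x) = Cxmod a * nnorm x.
Proof. destruct HV as (_&_&_&_&_&_&_&_&_&_&h&_); apply h. Qed.
Lemma norm_tri x y : nnorm (nadd x y) <= nnorm x + nnorm y.
Proof. destruct HV as (_&_&_&_&_&_&_&_&_&_&_&h&_); apply h. Qed.
Lemma complete (u : nat -> V) :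
  (forall eps, 0 < eps -> exists N, forall m n, (N <= m)%nat -> (N <= n)%nat ->
     nnorm (nsub (u m) (u n)) < eps) ->
  exists l : V, forall eps, 0 < eps -> exists N, forall n, (N <= n)%nat ->
     nnorm (nsub (u n) l) < eps.
Proof. destruct HV as (_&_&_&_&_&_&_&_&_&_&_&_&h); apply h. Qed.

Lemma add0l x : nadd nzero x = x.
Proof. rewrite addC; apply add0. Qed.
Lemma addNl x : nadd (nopp x) x = nzero.
Proof. rewrite addC; apply addN. Qed.
Lemma addAC x y z : nadd (nadd x y) z = nadd (nadd x z) y.
Proof. rewrite <- !addA, (addC y). reflexivity. Qed.
Lemma addCA x y z : nadd x (nadd y z) = nadd y (nadd x z).
Proof. rewrite !addA, (addC x). reflexivity. Qed.
Lemma add_cancel_l x y z : nadd x y = nadd x z -> y = z.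
Proof.
  intro H. rewrite <- (add0l y), <- (add0l z), <- (addNl x), <- !addA, H.
  reflexivity.
Qed.
Lemma opp_unique x y : nadd x y = nzero -> y = nopp x.
Proof. intro H. apply (add_cancel_l x). rewrite H, addN. reflexivity. Qed.
Lemma oppK x : nopp (nopp x) = x.
Proof. symmetry; apply opp_unique, addNl. Qed.
Lemma opp0 : @nopp V nzero = nzero.
Proof. symmetry; apply opp_unique, add0. Qed.
Lemma oppD x y : nopp (nadd x y) = nadd (nopp x) (nopp y).
Proof.
  symmetry; apply opp_unique.
  rewrite (addC (nopp x)), addA, <- (addA x), addN, add0, addN. reflexivity.
Qed.
Lemma subrr x : nsub x x = nzero.
Proof. apply addN. Qed.
Lemma sub0 x : nsub x nzero = x.
Proof. unfold nsub; rewrite opp0; apply add0. Qed.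
Lemma sub_eq x y : nsub x y = nzero -> x = y.
Proof.
  unfold nsub; intro H. apply opp_unique in H.
  rewrite <- (oppK x), <- H, oppK. reflexivity.
Qed.
Lemma addKsub x y : nadd y (nsub x y) = x.
Proof. unfold nsub. rewrite addCA, addN, add0. reflexivity. Qed.
Lemma sub_add x y z w : nsub (nadd x y) (nadd z w) = nadd (nsub x z) (nsub y w).
Proof. unfold nsub. rewrite oppD, <- addA, (addCA y), addA. reflexivity. Qed.

Lemma scal0 x : nscal Cx0 x = nzero.
Proof.
  apply (add_cancel_l (nscal Cx0 x)). rewrite add0, <- scalDl.
  unfold Cxplus, Cx0; simpl. rewrite Rplus_0_r. reflexivity.
Qed.
Lemma scal_m1 x : nscal (-1, 0) x = nopp x.
Proof.
  apply opp_unique. rewrite addC. rewrite <- (scal1 x) at 2. rewrite <- scalDl.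
  unfold Cxplus, Cx1; simpl. replace (-1 + 1) with 0 by ring.
  rewrite Rplus_0_r. apply scal0.
Qed.
Lemma scal_zero a : nscal a (@nzero V) = nzero.
Proof. apply (add_cancel_l (nscal a nzero)). rewrite <- scalDr, !add0. reflexivity. Qed.
Lemma scal_opp a x : nscal a (nopp x) = nopp (nscal a x).
Proof. apply opp_unique. rewrite <- scalDr, addN. apply scal_zero. Qed.

Lemma norm0 : @nnorm V nzero = 0.
Proof.
  rewrite <- (scal0 nzero), norm_scal. unfold Cxmod, Cx0; simpl.
  replace (0 * (0 * 1) + 0 * (0 * 1)) with 0 by ring. rewrite sqrt_0. ring.
Qed.
Lemma norm_opp x : nnorm (nopp x) = nnorm x.
Proof.
  rewrite <- scal_m1, norm_scal. unfold Cxmod; simpl.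
  replace (-1 * (-1 * 1) + 0 * (0 * 1)) with 1 by ring. rewrite sqrt_1. ring.
Qed.
Lemma norm_sub_sym x y : nnorm (nsub x y) = nnorm (nsub y x).
Proof. unfold nsub. rewrite <- norm_opp, oppD, oppK, addC. reflexivity. Qed.
Lemma norm_sub_tri x y z : nnorm (nsub x z) <= nnorm (nsub x y) + nnorm (nsub y z).
Proof.
  replace (nsub x z) with (nadd (nsub x y) (nsub y z)) by
    (unfold nsub; rewrite <- addA, (addA (nopp y)), addNl, add0l; reflexivity).
  apply norm_tri.
Qed.
End VectorSpace.

(* Proves an identity between two sums of (possibly negated) vectors that
   agree up to associativity and commutativity of nadd. *)
Ltac remove_summand t e := lazymatch e with
  | nadd ?e1 t => e1
  | nadd t ?b => b
  | nadd ?e1 ?b => let e1' := remove_summand t e1 in constr:(nadd e1' b)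
  end.
Ltac move_summand_last t := lazymatch goal with
  | |- nadd ?e t = nadd ?e t => reflexivity
  | |- nadd ?b t = nadd t ?b => apply addC
  | |- nadd (nadd ?e1' ?b) t = nadd ?e1 ?b =>
      rewrite (addAC e1' b t); f_equal; move_summand_last t
  end.
Ltac sum_perm := lazymatch goal with
  | |- ?x = ?x => reflexivity
  | |- nadd ?L ?t = ?R =>
      let R' := remove_summand t R in
      transitivity (nadd R' t); [f_equal; sum_perm | move_summand_last t]
  end.
Ltac vec_ac := unfold nsub; rewrite ?oppD, ?oppK, ?addA; sum_perm.

Section Linear.
Context {V W : NS} {HV : Ban V} {HW : Ban W}.
Variable f : V -> W.
Hypothesis hf : is_blin V W f.

Lemma lin_add x y : f (nadd x y) = nadd (f x) (f y).
Proof. apply hf. Qed.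
Lemma lin_scal a x : f (nscal a x) = nscal a (f x).
Proof. apply hf. Qed.
Lemma lin0 : f nzero = nzero.
Proof. apply (add_cancel_l (f nzero)). rewrite <- lin_add, !add0. reflexivity. Qed.
Lemma linB x y : f (nsub x y) = nsub (f x) (f y).
Proof.
  unfold nsub. rewrite lin_add. f_equal.
  apply opp_unique. rewrite <- lin_add, addN. apply lin0.
Qed.
Lemma blin_bnd : exists c, 0 <= c /\ forall x, nnorm (f x) <= c * nnorm x.
Proof.
  destruct hf as (_ & _ & c & hc). exists (Rabs c). split; [apply Rabs_pos|].
  intro x. eapply Rle_trans; [apply hc|].
  apply Rmult_le_compat_r; [apply norm_ge0 | apply RRle_abs].
Qed.
End Linear.

#[global] Instance ban_prod (X Y : NS) {HX : Ban X} {HY : Ban Y} : Ban (prodNS X Y).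
Proof.
  unfold Ban, is_cbanach; simpl. repeat split.
  - intros [x1 y1] [x2 y2] [x3 y3]; simpl; rewrite !addA; reflexivity.
  - intros [x1 y1] [x2 y2]; simpl; rewrite (addC x1), (addC y1); reflexivity.
  - intros [x1 y1]; simpl; rewrite !add0; reflexivity.
  - intros [x1 y1]; simpl; rewrite !addN; reflexivity.
  - intros a b [x1 y1]; simpl; rewrite !scalA; reflexivity.
  - intros [x1 y1]; simpl; rewrite !scal1; reflexivity.
  - intros a [x1 y1] [x2 y2]; simpl; rewrite !scalDr; reflexivity.
  - intros a b [x1 y1]; simpl; rewrite !scalDl; reflexivity.
  - intros [x1 y1]; simpl. pose proof (norm_ge0 x1); pose proof (norm_ge0 y1); lra.
  - intros [x1 y1]; simpl; intro h. pose proof (norm_ge0 x1); pose proof (norm_ge0 y1).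
    rewrite (norm_eq0 x1), (norm_eq0 y1) by lra. reflexivity.
  - intros a [x1 y1]; simpl; rewrite !norm_scal; ring.
  - intros [x1 y1] [x2 y2]; simpl.
    pose proof (norm_tri x1 x2); pose proof (norm_tri y1 y2); lra.
  - intros u hu.
    destruct (complete (fun n => fst (u n))) as [l1 hl1].
    { intros eps he. destruct (hu eps he) as [N hN]. exists N. intros m n hm hn.
      specialize (hN m n hm hn). pose proof (norm_ge0 (nsub (snd (u m)) (snd (u n)))).
      unfold nsub in *; simpl in *. lra. }
    destruct (complete (fun n => snd (u n))) as [l2 hl2].
    { intros eps he. destruct (hu eps he) as [N hN]. exists N. intros m n hm hn.
      specialize (hN m n hm hn). pose proof (norm_ge0 (nsub (fst (u m)) (fst (u n)))).
      unfold nsub in *; simpl in *. lra. }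
    exists (l1, l2). intros eps he.
    destruct (hl1 (eps / 2)) as [N1 h1]; [lra|].
    destruct (hl2 (eps / 2)) as [N2 h2]; [lra|].
    exists (max N1 N2). intros n hn.
    specialize (h1 n ltac:(lia)). specialize (h2 n ltac:(lia)).
    unfold nsub in *; simpl in *. lra.
Qed.

Section Constructions.
Context {U V W : NS} {HU : Ban U} {HV : Ban V} {HW : Ban W}.

Lemma blin_id : is_blin V V (fun x => x).
Proof. split; [|split]; auto. exists 1. intros; lra. Qed.

Lemma blin_zero : is_blin V W (fun _ => nzero).
Proof.
  split; [|split].
  - intros; rewrite add0; reflexivity.
  - intros; rewrite scal_zero; reflexivity.
  - exists 0. intro x. rewrite norm0. lra.
Qed.

Lemma blin_comp (f : V -> W) (g : U -> V) :
  is_blin V W f -> is_blin U V g -> is_blin U W (fun x => f (g x)).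
Proof.
  intros hf hg. destruct (blin_bnd f hf) as [c1 [h1p h1]], (blin_bnd g hg) as [c2 [h2p h2]].
  split; [|split].
  - intros x y. rewrite (lin_add g), (lin_add f); auto.
  - intros a x. rewrite (lin_scal g), (lin_scal f); auto.
  - exists (c1 * c2). intro x. eapply Rle_trans; [apply h1|].
    rewrite Rmult_assoc. apply Rmult_le_compat_l; auto.
Qed.

Lemma blin_add (f g : V -> W) :
  is_blin V W f -> is_blin V W g -> is_blin V W (fun x => nadd (f x) (g x)).
Proof.
  intros hf hg. destruct (blin_bnd f hf) as [c1 [h1p h1]], (blin_bnd g hg) as [c2 [h2p h2]].
  split; [|split].
  - intros x y. rewrite (lin_add g), (lin_add f); auto. vec_ac.
  - intros a x. rewrite (lin_scal g), (lin_scal f), scalDr; auto.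
  - exists (c1 + c2). intro x. eapply Rle_trans; [apply norm_tri|].
    specialize (h1 x); specialize (h2 x). lra.
Qed.

Lemma blin_sub (f g : V -> W) :
  is_blin V W f -> is_blin V W g -> is_blin V W (fun x => nsub (f x) (g x)).
Proof.
  intros hf hg. apply blin_add; auto.
  destruct (blin_bnd g hg) as [c [hc0 hc]]. split; [|split].
  - intros x y. rewrite (lin_add g), oppD; auto.
  - intros a x. rewrite (lin_scal g), scal_opp; auto.
  - exists c. intro x. rewrite norm_opp. apply hc.
Qed.
End Constructions.

Section Pairs.
Context {U X Y : NS} {HU : Ban U} {HX : Ban X} {HY : Ban Y}.

Lemma blin_pair (f : U -> X) (g : U -> Y) :
  is_blin U X f -> is_blin U Y g -> is_blin U (prodNS X Y) (fun u => (f u, g u)).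
Proof.
  intros hf hg. destruct (blin_bnd f hf) as [c1 [h1p h1]], (blin_bnd g hg) as [c2 [h2p h2]].
  split; [|split].
  - intros x y; simpl. rewrite (lin_add f), (lin_add g); auto.
  - intros a x; simpl. rewrite (lin_scal f), (lin_scal g); auto.
  - exists (c1 + c2). intro x; simpl. specialize (h1 x); specialize (h2 x). lra.
Qed.
Lemma blin_fst (g : U -> prodNS X Y) :
  is_blin U (prodNS X Y) g -> is_blin U X (fun u => fst (g u)).
Proof.
  intro hg. destruct (blin_bnd g hg) as [c [hc0 hc]]. split; [|split].
  - intros x y. rewrite (lin_add g hg). reflexivity.
  - intros a x. rewrite (lin_scal g hg). reflexivity.
  - exists c. intro x. specialize (hc x). pose proof (norm_ge0 (snd (g x))).
    simpl in hc. lra.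
Qed.
Lemma blin_snd (g : U -> prodNS X Y) :
  is_blin U (prodNS X Y) g -> is_blin U Y (fun u => snd (g u)).
Proof.
  intro hg. destruct (blin_bnd g hg) as [c [hc0 hc]]. split; [|split].
  - intros x y. rewrite (lin_add g hg). reflexivity.
  - intros a x. rewrite (lin_scal g hg). reflexivity.
  - exists c. intro x. specialize (hc x). pose proof (norm_ge0 (fst (g x))).
    simpl in hc. lra.
Qed.
End Pairs.

(* Proves boundedness and linearity of operators assembled from bounded
   linear ones by composition, sums, differences and pairing. *)
Ltac blin := repeat match goal with
  | |- is_blin ?U ?U (fun u => u) => apply blin_id
  | |- is_blin _ _ (fun _ => nzero) => apply blin_zero
  | |- is_blin _ _ (fun u => fst (@?g u)) => eapply (blin_fst g)
  | |- is_blin _ _ (fun u => snd (@?g u)) => eapply (blin_snd g)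
  | |- is_blin ?U (prodNS ?X ?Y) (fun u => (@?f u, @?g u)) =>
      apply (blin_pair (U:=U) (X:=X) (Y:=Y) f g)
  | |- is_blin ?U ?W (fun u => nsub (@?f u) (@?g u)) => apply (blin_sub (V:=U) (W:=W) f g)
  | |- is_blin ?U ?W (fun u => nadd (@?f u) (@?g u)) => apply (blin_add (V:=U) (W:=W) f g)
  | |- is_blin _ _ (fun u => ?F (@?g u)) => apply (blin_comp F g)
  | |- is_blin _ _ _ => assumption
  end.

Lemma INR_le_pow2 n : INR n <= 2 ^ n.
Proof.
  induction n; [simpl; lra|]. rewrite S_INR. simpl.
  pose proof (pow_R1_Rle 2 n ltac:(lra)). lra.
Qed.

(* Uniform geometric decay of the powers of T at every rate r > 0; for a
   bounded operator this is equivalent to quasinilpotence, and it is the form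
   in which quasinilpotence is propagated through the constructions below. *)
Definition geom_decay (V : NS) (T : V -> V) : Prop :=
  forall r, 0 < r -> exists K, 0 <= K /\
    forall n x, nnorm (Nat.iter n T x) <= K * r ^ n * nnorm x.

Section GeometricDecay.
Context {V : NS} {HV : Ban V}.

Lemma iter_blin (T : V -> V) n : is_blin V V T -> is_blin V V (Nat.iter n T).
Proof.
  intro hT. induction n; simpl; [apply blin_id|].
  apply (blin_comp T (Nat.iter n T)); auto.
Qed.

Lemma iter_bnd (T : V -> V) c : 0 <= c -> (forall x, nnorm (T x) <= c * nnorm x) ->
  forall n x, nnorm (Nat.iter n T x) <= c ^ n * nnorm x.
Proof.
  intros hc h n. induction n; intro x; simpl; [lra|].
  eapply Rle_trans; [apply h|]. rewrite Rmult_assoc. apply Rmult_le_compat_l; auto.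
Qed.

(* A decay bound valid for large n extends to all n, at the price of a
   larger constant covering the finitely many first powers. *)
Lemma geom_decay_of_eventually (T : V -> V) : is_blin V V T ->
  (forall r, 0 < r -> exists N, forall n x, (N <= n)%nat ->
     nnorm (Nat.iter n T x) <= r ^ n * nnorm x) ->
  geom_decay V T.
Proof.
  intros hT hev r hr. destruct (hev r hr) as [N hN].
  destruct (blin_bnd T hT) as [c [hc0 hc]].
  assert (h1 : 1 <= 1 + c / r).
  { assert (0 <= c / r) by (unfold Rdiv; apply Rmult_le_pos; [lra | left; apply Rinv_0_lt_compat; lra]). lra. }
  pose proof (pow_R1_Rle _ N h1) as hpow.
  exists ((1 + c / r) ^ N). split; [lra|].
  intros n x. pose proof (norm_ge0 x).
  destruct (le_lt_dec N n) as [hn|hn].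
  - eapply Rle_trans; [apply hN; auto|].
    pose proof (pow_le r n ltac:(lra)). apply Rmult_le_compat_r; auto. nra.
  - apply Rle_trans with (c ^ n * nnorm x); [apply iter_bnd; auto|].
    apply Rmult_le_compat_r; auto.
    apply Rle_trans with ((r * (1 + c / r)) ^ n).
    { apply pow_incr. replace (r * (1 + c / r)) with (r + c) by (field; lra). lra. }
    rewrite Rpow_mult_distr, Rmult_comm. apply Rmult_le_compat_r; [apply pow_le; lra|].
    apply Rle_pow; auto; lia.
Qed.

Lemma geom_decay_of_qnil (T : V -> V) :
  is_blin V V T -> quasinilpotent V T -> geom_decay V T.
Proof.
  intros hT hq. apply geom_decay_of_eventually; auto. intros r hr.
  destruct (hq r hr) as [N hN]. exists N. intros n x hn.
  destruct (hN n hn) as [c [hc1 hc2]]. eapply Rle_trans; [apply hc2|].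
  apply Rmult_le_compat_r; [apply norm_ge0 | lra].
Qed.

Lemma qnil_of_geom_decay (T : V -> V) : geom_decay V T -> quasinilpotent V T.
Proof.
  intros hq eps he. destruct (hq (eps / 2) ltac:(lra)) as [K [hK hb]].
  destruct (INR_archimed 1 K ltac:(lra)) as [N hN].
  exists N. intros n hn. exists (K * (eps / 2) ^ n). split; [|intro x; apply hb].
  apply le_INR in hn. pose proof (INR_le_pow2 n).
  replace (eps ^ n) with ((eps / 2) ^ n * 2 ^ n)
    by (rewrite <- Rpow_mult_distr; f_equal; field).
  pose proof (pow_lt (eps / 2) n ltac:(lra)). nra.
Qed.

Lemma geom_decay_of_shifted (T : V -> V) :
  (forall r, 0 < r -> exists C, 0 <= C /\
     forall n x, nnorm (Nat.iter (S n) T x) <= C * r ^ n * nnorm x) ->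
  geom_decay V T.
Proof.
  intros H r hr. destruct (H r hr) as [C [hC hb]].
  pose proof (Rmax_l 1 (C / r)). pose proof (Rmax_r 1 (C / r)).
  exists (Rmax 1 (C / r)). split; [lra|].
  intros [|n] x; pose proof (norm_ge0 x); simpl; [nra|].
  eapply Rle_trans; [apply hb|]. apply Rmult_le_compat_r; auto.
  pose proof (pow_le r n ltac:(lra)).
  replace (C * r ^ n) with ((C / r) * (r * r ^ n)) by (field; lra).
  apply Rmult_le_compat_r; nra.
Qed.
End GeometricDecay.

Lemma gd_ext (V : NS) (f g : V -> V) :
  (forall v, f v = g v) -> has_gdrazin V f -> has_gdrazin V g.
Proof. intro h. replace g with f; [auto|]. apply functional_extensionality; auto. Qed.

Lemma qnil_ext (V : NS) (f g : V -> V) :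
  (forall v, f v = g v) -> quasinilpotent V f -> quasinilpotent V g.
Proof. intro h. replace g with f; [auto|]. apply functional_extensionality; auto. Qed.

Lemma gd_nilpotent {V : NS} {HV : Ban V} (T : V -> V) k : is_blin V V T ->
  (forall x, Nat.iter k T x = nzero) -> has_gdrazin V T.
Proof.
  intros hT hk. exists (fun _ => nzero). split; [blin|]. split; [|split].
  - reflexivity.
  - intro v. apply (lin0 T hT).
  - apply qnil_ext with T; [intro v; rewrite !(lin0 T hT), sub0; reflexivity|].
    apply qnil_of_geom_decay, geom_decay_of_eventually; auto.
    intros r hr. exists k. intros n x hn.
    replace n with ((n - k) + k)%nat by lia. rewrite Nat.iter_add, hk.
    rewrite (lin0 _ (iter_blin T (n - k) hT)), norm0.
    pose proof (norm_ge0 x). pose proof (pow_le r (n - k + k) ltac:(lra)). nra.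
Qed.

Lemma gd_zero {V : NS} {HV : Ban V} : has_gdrazin V (fun _ => nzero).
Proof. apply (gd_nilpotent _ 1); [blin | reflexivity]. Qed.

(* Cline's formula: if g f has a g-Drazin inverse x, then f g has the
   g-Drazin inverse f x^2 g. *)
Section Cline.
Context {V W : NS} {HV : Ban V} {HW : Ban W}.
Variables (f : W -> V) (g : V -> W).
Hypotheses (hf : is_blin W V f) (hg : is_blin V W g).

(* (f e g)^(n+1) = f ((e g f)^n (e (g v))): powers of f e g are controlled
   by powers of e (g f). *)
Lemma iter_sandwich (e : W -> W) n v :
  Nat.iter (S n) (fun v => f (e (g v))) v =
  f (Nat.iter n (fun w => e (g (f w))) (e (g v))).
Proof.
  induction n; [reflexivity|].
  change (f (e (g (Nat.iter (S n) (fun v => f (e (g v))) v))) =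
          f (e (g (f (Nat.iter n (fun w => e (g (f w))) (e (g v))))))).
  rewrite IHn. reflexivity.
Qed.

Lemma gd_cline : has_gdrazin W (fun w => g (f w)) -> has_gdrazin V (fun v => f (g v)).
Proof.
  intros [x [hx [x_inner [x_comm x_qnil]]]].
  (* e = 1 - (g f) x, so that (g f) e is the quasinilpotent part of g f. *)
  set (e := fun w => nsub w (g (f (x w)))).
  assert (he : is_blin W W e) by (unfold e; blin).
  exists (fun v => f (x (x (g v)))). split; [blin|]. split; [|split].
  - intro v. f_equal. rewrite (x_comm (x (g v))), x_inner, x_inner. reflexivity.
  - intro v. f_equal. rewrite (x_comm (x (g v))), (x_comm (g v)). reflexivity.
  - apply qnil_ext with (fun v => f (e (g v))).
    { intro v. unfold e. rewrite <- (linB f hf), (x_comm (x (g v))), x_inner. reflexivity. }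
    apply qnil_of_geom_decay, geom_decay_of_shifted. intros r hr.
    assert (hgfx : is_blin W W (fun w => nsub (g (f w)) (g (f (g (f (x w))))))) by blin.
    destruct (geom_decay_of_qnil _ hgfx x_qnil r hr) as [K [hK decay]].
    destruct (blin_bnd f hf) as [cf [hcf bf]], (blin_bnd g hg) as [cg [hcg bg]],
      (blin_bnd e he) as [ce [hce be]].
    exists (cf * K * ce * cg). split; [repeat apply Rmult_le_pos; auto|].
    intros n v. rewrite iter_sandwich.
    replace (fun w => e (g (f w))) with (fun w => nsub (g (f w)) (g (f (g (f (x w))))))
      by (apply functional_extensionality; intro w; unfold e; rewrite (x_comm w); reflexivity).
    eapply Rle_trans; [apply bf|].
    pose proof (decay n (e (g v))). pose proof (be (g v)). pose proof (bg v).
    pose proof (norm_ge0 v). pose proof (norm_ge0 (g v)). pose proof (norm_ge0 (e (g v))).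
    pose proof (pow_le r n ltac:(lra)).
    assert (0 <= K * r ^ n) by (apply Rmult_le_pos; auto).
    assert (nnorm (e (g v)) <= ce * cg * nnorm v) by nra.
    replace (cf * K * ce * cg * r ^ n * nnorm v) with
      (cf * ((K * r ^ n) * (ce * cg * nnorm v))) by ring.
    apply Rmult_le_compat_l; [auto|]. eapply Rle_trans; [eassumption|].
    apply Rmult_le_compat_l; auto.
Qed.
End Cline.

(* Invariance under a retraction: if J J' = 1 and J' T J has a g-Drazin
   inverse, so does T (used for changes of coordinates). *)
Lemma gd_retract {V W : NS} {HV : Ban V} {HW : Ban W} (T : V -> V) (J : W -> V) (J' : V -> W) :
  is_blin V V T -> is_blin W V J -> is_blin V W J' -> (forall v, J (J' v) = v) ->
  has_gdrazin W (fun w => J' (T (J w))) -> has_gdrazin V T.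
Proof.
  intros hT hJ hJ' hJJ' g. apply gd_ext with (fun v => J (J' (T v))); [intro; apply hJJ'|].
  apply (gd_cline J (fun v => J' (T v))); auto. blin.
Qed.

(* A lower triangular operator L = [[a, 0], [w, d]] on X (+) Y whose diagonal
   entries decay geometrically decays geometrically: the off-diagonal entry of
   L^n is sum_(k<n) d^(n-1-k) w a^k, of norm at most n C r^n. *)
Section TriangularDecay.
#[local] Set Default Proof Using "All".
Context {X Y : NS} {HX : Ban X} {HY : Ban Y}.
Variables (L : prodNS X Y -> prodNS X Y) (a : X -> X) (d : Y -> Y).
Hypotheses (hL : is_blin _ _ L) (ha : is_blin X X a) (hd : is_blin Y Y d)
  (L_fst : forall x y, fst (L (x, y)) = a x) (L_snd : forall y, snd (L (nzero, y)) = d y).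

Definition offdiag x := snd (L (x, nzero)).

Lemma L_on_Y y : L (nzero, y) = (nzero, d y).
Proof.
  transitivity (fst (L (nzero, y)), snd (L (nzero, y))); [destruct (L (nzero, y)); reflexivity|].
  rewrite L_fst, L_snd, (lin0 a ha). reflexivity.
Qed.

Lemma L_on_X x : L (x, nzero) = (a x, offdiag x).
Proof.
  transitivity (fst (L (x, nzero)), snd (L (x, nzero))); [destruct (L (x, nzero)); reflexivity|].
  rewrite L_fst. reflexivity.
Qed.

Lemma iter_fst n p : fst (Nat.iter n L p) = Nat.iter n a (fst p).
Proof.
  induction n; [reflexivity|]. rewrite !Nat.iter_succ, <- IHn.
  destruct (Nat.iter n L p). apply L_fst.
Qed.

Lemma iter_on_Y n y : Nat.iter n L (nzero, y) = (nzero, Nat.iter n d y).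
Proof. induction n; [reflexivity|]. rewrite !Nat.iter_succ, IHn. apply L_on_Y. Qed.

Lemma iter_add n (p q : prodNS X Y) :
  Nat.iter n L (nadd p q) = nadd (Nat.iter n L p) (Nat.iter n L q).
Proof. apply (lin_add _ (iter_blin _ n hL)). Qed.

Lemma iter_offdiag n x : snd (Nat.iter (S n) L (x, nzero)) =
  nadd (snd (Nat.iter n L (a x, nzero))) (Nat.iter n d (offdiag x)).
Proof.
  rewrite Nat.iter_succ_r, L_on_X.
  replace (a x, offdiag x) with (@nadd (prodNS X Y) (a x, nzero) (nzero, offdiag x))
    by (simpl; rewrite add0, add0l; reflexivity).
  rewrite iter_add, iter_on_Y. reflexivity.
Qed.
Lemma iter_decompose n x y : Nat.iter n L (x, y) =
  (Nat.iter n a x, nadd (snd (Nat.iter n L (x, nzero))) (Nat.iter n d y)).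
Proof.
  replace (x, y) with (@nadd (prodNS X Y) (x, nzero) (nzero, y)) at 1
    by (simpl; rewrite add0, add0l; reflexivity).
  rewrite iter_add, iter_on_Y.
  change (((nadd (fst (Nat.iter n L (x, nzero))) nzero,
            nadd (snd (Nat.iter n L (x, nzero))) (Nat.iter n d y)) : prodNS X Y) =
          (Nat.iter n a x, nadd (snd (Nat.iter n L (x, nzero))) (Nat.iter n d y))).
  rewrite add0, iter_fst. reflexivity.
Qed.

Lemma offdiag_bound r Ka Kd cw : 0 < r -> 0 <= Ka -> 0 <= Kd -> 0 <= cw ->
  (forall n x, nnorm (Nat.iter n a x) <= Ka * r ^ n * nnorm x) ->
  (forall n y, nnorm (Nat.iter n d y) <= Kd * r ^ n * nnorm y) ->
  (forall x, nnorm (offdiag x) <= cw * nnorm x) ->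
  forall n m x, nnorm (snd (Nat.iter n L (Nat.iter m a x, nzero))) <=
    INR n * (Kd * cw * Ka / r) * r ^ (n + m) * nnorm x.
Proof.
  intros hr hKa hKd hcw ba bd bw. set (C := Kd * cw * Ka / r).
  assert (eC : C * r = Kd * cw * Ka) by (unfold C; field; lra). clearbody C.
  induction n; intros m x; pose proof (norm_ge0 x).
  { simpl. rewrite norm0. lra. }
  rewrite iter_offdiag. eapply Rle_trans; [apply norm_tri|].
  pose proof (IHn (S m) x) as IH. rewrite Nat.add_succ_r in IH. simpl Nat.iter in IH.
  assert (bwa : nnorm (Nat.iter n d (offdiag (Nat.iter m a x))) <= C * r * (r ^ n * r ^ m) * nnorm x).
  { rewrite eC. eapply Rle_trans; [apply bd|].
    pose proof (pow_le r n ltac:(lra)). pose proof (pow_le r m ltac:(lra)).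
    pose proof (bw (Nat.iter m a x)). pose proof (ba m x).
    pose proof (norm_ge0 (offdiag (Nat.iter m a x))).
    replace (Kd * cw * Ka * (r ^ n * r ^ m) * nnorm x) with
      (Kd * r ^ n * (cw * (Ka * r ^ m * nnorm x))) by ring.
    apply Rmult_le_compat_l; [apply Rmult_le_pos; auto|]. nra. }
  replace (S n + m)%nat with (S (n + m)) by lia. rewrite S_INR. simpl pow in *.
  rewrite pow_add in *.
  replace ((INR n + 1) * C * (r * (r ^ n * r ^ m)) * nnorm x) with
    (INR n * C * (r * (r ^ n * r ^ m)) * nnorm x + C * r * (r ^ n * r ^ m) * nnorm x) by ring.
  apply Rplus_le_compat; [exact IH | exact bwa].
Qed.

Lemma geom_decay_lowtri : geom_decay X a -> geom_decay Y d -> geom_decay (prodNS X Y) L.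
Proof.
  intros qa qd r' hr'. set (r := r' / 2). assert (hr : 0 < r) by (unfold r; lra).
  assert (hpow : forall n, r ^ n * 2 ^ n = r' ^ n)
    by (intro n; rewrite <- Rpow_mult_distr; f_equal; unfold r; field).
  clearbody r.
  destruct (qa r hr) as [Ka [hKa ba]], (qd r hr) as [Kd [hKd bd]].
  assert (hw : is_blin X Y offdiag) by (unfold offdiag; blin).
  destruct (blin_bnd offdiag hw) as [cw [hcw bw]].
  pose proof (offdiag_bound r Ka Kd cw hr hKa hKd hcw ba bd bw) as boff.
  set (C := Kd * cw * Ka / r) in boff.
  assert (hC : 0 <= C).
  { unfold C, Rdiv. apply Rmult_le_pos; [repeat apply Rmult_le_pos; auto|].
    left; apply Rinv_0_lt_compat; lra. }
  clearbody C. exists (Ka + C + Kd). split; [lra|]. intros n [x y].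
  (* r^n <= r'^n and n r^n <= r'^n give the rate r' for both diagonal
     terms and for the off-diagonal term *)
  pose proof (hpow n). pose proof (INR_le_pow2 n). pose proof (pow_R1_Rle 2 n ltac:(lra)).
  pose proof (pow_le r n ltac:(lra)). pose proof (pos_INR n).
  assert (A1 : r ^ n <= r' ^ n) by nra.
  assert (A2 : INR n * r ^ n <= r' ^ n) by nra.
  assert (0 <= r' ^ n) by lra.
  assert (hx : Ka * r ^ n + INR n * C * r ^ n <= (Ka + C + Kd) * r' ^ n).
  { replace (INR n * C * r ^ n) with (C * (INR n * r ^ n)) by ring. nra. }
  assert (hy : Kd * r ^ n <= (Ka + C + Kd) * r' ^ n) by nra.
  rewrite iter_decompose. simpl nnorm.
  pose proof (boff n 0%nat x) as B2. simpl Nat.iter in B2. rewrite Nat.add_0_r in B2.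
  eapply Rle_trans; [apply Rplus_le_compat_l, norm_tri|].
  eapply Rle_trans;
    [apply Rplus_le_compat; [apply ba | apply Rplus_le_compat; [exact B2 | apply bd]]|].
  pose proof (norm_ge0 x). pose proof (norm_ge0 y).
  apply Rle_trans with ((Ka * r ^ n + INR n * C * r ^ n) * nnorm x + Kd * r ^ n * nnorm y);
    [right; ring|].
  rewrite Rmult_plus_distr_l.
  apply Rplus_le_compat; apply Rmult_le_compat_r; auto.
Qed.
End TriangularDecay.

Section Limits.
Context {V : NS} {HV : Ban V}.

Definition lim_to (u : nat -> V) (l : V) :=
  forall eps, 0 < eps -> exists N, forall n, (N <= n)%nat -> nnorm (nsub (u n) l) < eps.

Lemma le_of_eps (a b : R) : (forall eps, 0 < eps -> a < b + eps) -> a <= b.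
Proof.
  intro h. destruct (Rle_lt_dec a b) as [h1|h1]; auto.
  specialize (h ((a - b) / 2) ltac:(lra)). lra.
Qed.

Lemma lim_unique u l1 l2 : lim_to u l1 -> lim_to u l2 -> l1 = l2.
Proof.
  intros h1 h2. apply sub_eq, norm_eq0, Rle_antisym; [|apply norm_ge0].
  apply le_of_eps. intros eps he.
  destruct (h1 (eps / 2) ltac:(lra)) as [N1 hN1], (h2 (eps / 2) ltac:(lra)) as [N2 hN2].
  specialize (hN1 (max N1 N2) ltac:(lia)). specialize (hN2 (max N1 N2) ltac:(lia)).
  pose proof (norm_sub_tri l1 (u (max N1 N2)) l2). rewrite norm_sub_sym in hN1. lra.
Qed.

Lemma lim_ext u v l : (forall n, u n = v n) -> lim_to u l -> lim_to v l.
Proof. intros e h. replace v with u; auto. apply functional_extensionality; auto. Qed.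

Lemma lim_shift u l : lim_to u l -> lim_to (fun n => u (S n)) l.
Proof. intros h eps he. destruct (h eps he) as [N hN]. exists N. intros n hn. apply hN. lia. Qed.

Lemma lim_add u v l m :
  lim_to u l -> lim_to v m -> lim_to (fun n => nadd (u n) (v n)) (nadd l m).
Proof.
  intros h1 h2 eps he.
  destruct (h1 (eps / 2) ltac:(lra)) as [N1 hN1], (h2 (eps / 2) ltac:(lra)) as [N2 hN2].
  exists (max N1 N2). intros n hn. rewrite sub_add. eapply Rle_lt_trans; [apply norm_tri|].
  specialize (hN1 n ltac:(lia)). specialize (hN2 n ltac:(lia)). lra.
Qed.

Lemma lim_scal a u l : lim_to u l -> lim_to (fun n => nscal a (u n)) (nscal a l).
Proof.
  intros h eps he. assert (hm : 0 <= Cxmod a) by (unfold Cxmod; apply sqrt_pos).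
  destruct (h (eps / (Cxmod a + 1))) as [N hN]; [apply Rdiv_lt_0_compat; lra|].
  exists N. intros n hn.
  replace (nsub (nscal a (u n)) (nscal a l)) with (nscal a (nsub (u n) l))
    by (unfold nsub; rewrite scalDr, scal_opp; reflexivity).
  rewrite norm_scal. specialize (hN n hn). pose proof (norm_ge0 (nsub (u n) l)).
  replace eps with ((eps / (Cxmod a + 1)) * (Cxmod a + 1)) by (field; lra). nra.
Qed.
End Limits.

Lemma lim_lin {V W : NS} {HV : Ban V} {HW : Ban W} (T : V -> W) u l :
  is_blin V W T -> lim_to u l -> lim_to (fun n => T (u n)) (T l).
Proof.
  intros hT h eps he. destruct (blin_bnd T hT) as [c [hc bc]].
  destruct (h (eps / (c + 1))) as [N hN]; [apply Rdiv_lt_0_compat; lra|].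
  exists N. intros n hn. rewrite <- (linB T hT). eapply Rle_lt_trans; [apply bc|].
  specialize (hN n hn). pose proof (norm_ge0 (nsub (u n) l)).
  replace eps with ((eps / (c + 1)) * (c + 1)) by (field; lra). nra.
Qed.

(* The Sylvester-type equation Z = H + F Z G has the bounded solution
   Z = sum_n F^n H G^n whenever the terms decay geometrically. *)
Section Sylvester.
Context {X Y : NS} {HX : Ban X} {HY : Ban Y}.
Variables (F : Y -> Y) (G : X -> X) (H : X -> Y).
Hypotheses (hF : is_blin Y Y F) (hG : is_blin X X G) (hH : is_blin X Y H).

Definition sylv_term n x := Nat.iter n F (H (Nat.iter n G x)).

Fixpoint sylv_sum N x : Y :=
  match N with O => nzero | S N => nadd (sylv_sum N x) (sylv_term N x) end.

Lemma sylv_term_blin n : is_blin X Y (sylv_term n).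
Proof.
  unfold sylv_term. pose proof (iter_blin F n hF). pose proof (iter_blin G n hG). blin.
Qed.

Lemma sylv_sum_succ N x : sylv_sum (S N) x = nadd (H x) (F (sylv_sum N (G x))).
Proof.
  revert x; induction N; intro x.
  - simpl. rewrite (lin0 F hF), add0, add0l. reflexivity.
  - change (sylv_sum (S (S N)) x) with (nadd (sylv_sum (S N) x) (sylv_term (S N) x)).
    rewrite IHN. simpl sylv_sum. rewrite (lin_add F hF), <- addA. do 2 f_equal.
    unfold sylv_term. rewrite (Nat.iter_succ_r N _ G). reflexivity.
Qed.

Lemma sylv_sum_add N x y : sylv_sum N (nadd x y) = nadd (sylv_sum N x) (sylv_sum N y).
Proof.
  induction N; simpl; [rewrite add0; reflexivity|].
  rewrite IHN, (lin_add _ (sylv_term_blin N)). vec_ac.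
Qed.

Lemma sylv_sum_scal N a x : sylv_sum N (nscal a x) = nscal a (sylv_sum N x).
Proof.
  induction N; simpl; [rewrite scal_zero; reflexivity|].
  rewrite IHN, (lin_scal _ (sylv_term_blin N)), scalDr. reflexivity.
Qed.

Variables (K rho : R).
Hypotheses (hK : 0 <= K) (hrho0 : 0 <= rho) (hrho1 : rho < 1)
  (decay : forall n x, nnorm (sylv_term n x) <= K * rho ^ n * nnorm x).

Lemma sylv_sum_tail N k x : nnorm (nsub (sylv_sum (N + k) x) (sylv_sum N x)) <=
  K * rho ^ N * (1 - rho ^ k) / (1 - rho) * nnorm x.
Proof.
  induction k.
  - rewrite Nat.add_0_r, subrr, norm0. simpl. pose proof (norm_ge0 x).
    replace (K * rho ^ N * (1 - 1) / (1 - rho) * nnorm x) with 0 by (field; lra). lra.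
  - rewrite Nat.add_succ_r. simpl sylv_sum.
    replace (nsub (nadd (sylv_sum (N + k) x) (sylv_term (N + k) x)) (sylv_sum N x))
      with (nadd (nsub (sylv_sum (N + k) x) (sylv_sum N x)) (sylv_term (N + k) x))
      by (unfold nsub; rewrite addAC; reflexivity).
    eapply Rle_trans; [apply norm_tri|]. specialize (decay (N + k)%nat x).
    rewrite pow_add in decay.
    replace (K * rho ^ N * (1 - rho ^ S k) / (1 - rho) * nnorm x) with
      (K * rho ^ N * (1 - rho ^ k) / (1 - rho) * nnorm x + K * (rho ^ N * rho ^ k) * nnorm x)
      by (simpl; field; lra).
    lra.
Qed.

Lemma sylv_sum_bnd N x : nnorm (sylv_sum N x) <= K / (1 - rho) * nnorm x.
Proof.
  pose proof (sylv_sum_tail 0 N x) as h. simpl in h. rewrite sub0 in h.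
  eapply Rle_trans; [apply h|]. pose proof (norm_ge0 x). pose proof (pow_le rho N hrho0).
  apply Rmult_le_compat_r; auto. unfold Rdiv. rewrite Rmult_1_r.
  apply Rmult_le_compat_r; [left; apply Rinv_0_lt_compat; lra | nra].
Qed.

Lemma sylv_sum_cvg x : exists l, lim_to (fun n => sylv_sum n x) l.
Proof.
  apply complete. intros eps he.
  set (M := K / (1 - rho) * nnorm x).
  assert (hM : 0 <= M).
  { unfold M. apply Rmult_le_pos; [|apply norm_ge0].
    apply Rmult_le_pos; [auto | left; apply Rinv_0_lt_compat; lra]. }
  destruct (pow_lt_1_zero rho ltac:(rewrite Rabs_pos_eq; lra) ((eps / 2) / (M + 1)))
    as [N hN]; [apply Rdiv_lt_0_compat; lra|].
  assert (near : forall m, (N <= m)%nat -> nnorm (nsub (sylv_sum m x) (sylv_sum N x)) < eps / 2).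
  { intros m hm. replace m with (N + (m - N))%nat by lia.
    eapply Rle_lt_trans; [apply sylv_sum_tail|].
    specialize (hN N (le_n N)). rewrite Rabs_pos_eq in hN by (apply pow_le; auto).
    pose proof (pow_le rho (m - N) hrho0). pose proof (pow_le rho N hrho0).
    apply Rle_lt_trans with (rho ^ N * M).
    { unfold M, Rdiv. pose proof (norm_ge0 x).
      assert (0 <= / (1 - rho)) by (left; apply Rinv_0_lt_compat; lra).
      assert (0 <= rho ^ N * (K * / (1 - rho) * nnorm x)) by (repeat apply Rmult_le_pos; auto).
      replace (K * rho ^ N * (1 - rho ^ (m - N)) * / (1 - rho) * nnorm x) with
        ((rho ^ N * (K * / (1 - rho) * nnorm x)) * (1 - rho ^ (m - N))) by ring.
      nra. }
    replace (eps / 2) with ((eps / 2) / (M + 1) * (M + 1)) by (field; lra). nra. }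
  exists N. intros m n hm hn.
  pose proof (near m hm). pose proof (near n hn).
  pose proof (norm_sub_tri (sylv_sum m x) (sylv_sum N x) (sylv_sum n x)) as tri.
  rewrite (norm_sub_sym (sylv_sum N x)) in tri. lra.
Qed.

Definition sylv_sol (x : X) : Y :=
  proj1_sig (constructive_indefinite_description _ (sylv_sum_cvg x)).

Lemma sylv_sol_lim x : lim_to (fun n => sylv_sum n x) (sylv_sol x).
Proof. unfold sylv_sol. destruct (constructive_indefinite_description _ _). auto. Qed.

Lemma sylv_sol_blin : is_blin X Y sylv_sol.
Proof.
  split; [|split].
  - intros x y. apply (lim_unique (fun n => sylv_sum n (nadd x y))); [apply sylv_sol_lim|].
    apply lim_ext with (fun n => nadd (sylv_sum n x) (sylv_sum n y));
      [intro n; rewrite sylv_sum_add; auto|].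
    apply lim_add; apply sylv_sol_lim.
  - intros a x. apply (lim_unique (fun n => sylv_sum n (nscal a x))); [apply sylv_sol_lim|].
    apply lim_ext with (fun n => nscal a (sylv_sum n x)); [intro n; rewrite sylv_sum_scal; auto|].
    apply lim_scal, sylv_sol_lim.
  - exists (K / (1 - rho)). intro x. apply le_of_eps. intros eps he.
    destruct (sylv_sol_lim x eps he) as [N hN]. specialize (hN N (le_n N)).
    pose proof (sylv_sum_bnd N x).
    pose proof (norm_sub_tri (sylv_sol x) (sylv_sum N x) nzero) as tri.
    rewrite !sub0, norm_sub_sym in tri. lra.
Qed.

Lemma sylv_sol_eq x : sylv_sol x = nadd (H x) (F (sylv_sol (G x))).
Proof.
  apply (lim_unique (fun n => sylv_sum (S n) x)).
  - apply (lim_shift (fun n => sylv_sum n x)), sylv_sol_lim.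
  - apply lim_ext with (fun n => nadd (H x) (F (sylv_sum n (G x))));
      [intro n; rewrite sylv_sum_succ; auto|].
    apply lim_add; [intros eps he; exists 0%nat; intros; rewrite subrr, norm0; auto|].
    apply lim_lin; auto. apply sylv_sol_lim.
Qed.
End Sylvester.

Lemma sylvester_solution {X Y : NS} {HX : Ban X} {HY : Ban Y}
  (F : Y -> Y) (G : X -> X) (H : X -> Y) (K rho : R) :
  is_blin Y Y F -> is_blin X X G -> is_blin X Y H ->
  0 <= K -> 0 <= rho -> rho < 1 ->
  (forall n x, nnorm (Nat.iter n F (H (Nat.iter n G x))) <= K * rho ^ n * nnorm x) ->
  exists Z, is_blin X Y Z /\ forall x, Z x = nadd (H x) (F (Z (G x))).
Proof.
  intros hF hG hH hK h0 h1 hb. exists (sylv_sol F G H K rho hK h0 h1 hb).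
  split; [apply sylv_sol_blin | apply sylv_sol_eq]; auto.
Qed.

Definition is_gdinv (V : NS) (T t : V -> V) : Prop :=
  is_blin V V t /\ (forall v, t (T (t v)) = t v) /\ (forall v, T (t v) = t (T v)) /\
  quasinilpotent V (fun v => nsub (T v) (T (T (t v)))).

(* The spectral idempotents of T with g-Drazin inverse t: p = T t projects
   onto the part where T is invertible, pi = 1 - p onto the part where T is
   quasinilpotent. *)
Section SpectralIdempotents.
#[local] Set Default Proof Using "All".
Context {V : NS} {HV : Ban V}.
Variables (T t : V -> V).
Hypotheses (hT : is_blin V V T) (ht : is_gdinv V T t).

Lemma gdinv_blin : is_blin V V t.
Proof. apply ht. Qed.
Lemma t_inner v : t (T (t v)) = t v.
Proof. apply ht. Qed.
Lemma t_comm v : T (t v) = t (T v).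
Proof. apply ht. Qed.
Lemma t_qnil : quasinilpotent V (fun v => nsub (T v) (T (T (t v)))).
Proof. apply ht. Qed.

Definition sp_core x := T (t x).
Definition sp_nil x := nsub x (sp_core x).

Lemma sp_core_blin : is_blin V V sp_core.
Proof. pose proof gdinv_blin. unfold sp_core. blin. Qed.
Lemma sp_nil_blin : is_blin V V sp_nil.
Proof. pose proof gdinv_blin. unfold sp_nil, sp_core. blin. Qed.

Lemma inv_core x : t (sp_core x) = t x.
Proof. apply t_inner. Qed.
Lemma core_inv x : sp_core (t x) = t x.
Proof. unfold sp_core. rewrite t_comm. apply t_inner. Qed.
Lemma core_idem x : sp_core (sp_core x) = sp_core x.
Proof. unfold sp_core at 1. rewrite inv_core. reflexivity. Qed.
Lemma inv_op x : t (T x) = sp_core x.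
Proof. unfold sp_core. rewrite t_comm. reflexivity. Qed.
Lemma core_nil x : sp_core (sp_nil x) = nzero.
Proof. unfold sp_nil. rewrite (linB _ sp_core_blin), core_idem. apply subrr. Qed.
Lemma nil_core x : sp_nil (sp_core x) = nzero.
Proof. unfold sp_nil. rewrite core_idem. apply subrr. Qed.
Lemma nil_idem x : sp_nil (sp_nil x) = sp_nil x.
Proof. unfold sp_nil at 1. rewrite core_nil, sub0. reflexivity. Qed.
Lemma op_nil x : T (sp_nil x) = sp_nil (T x).
Proof.
  unfold sp_nil, sp_core. rewrite (linB _ hT), t_comm. reflexivity.
Qed.
Lemma iter_nil n x : Nat.iter n T (sp_nil x) = sp_nil (Nat.iter n T x).
Proof. induction n; [reflexivity|]. rewrite !Nat.iter_succ, IHn, op_nil. reflexivity. Qed.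

(* On the range of pi, T agrees with its quasinilpotent part T - T^2 t, so
   the powers of T decay geometrically there. *)
Lemma iter_on_nil n x :
  Nat.iter n T (sp_nil x) = Nat.iter n (fun v => nsub (T v) (T (T (t v)))) (sp_nil x).
Proof.
  induction n; [reflexivity|]. rewrite !Nat.iter_succ, <- IHn, iter_nil.
  replace (nsub (T _) (T (T (t _)))) with (T (sp_nil (sp_nil (Nat.iter n T x))))
    by (unfold sp_nil at 1; rewrite (linB _ hT); reflexivity).
  rewrite nil_idem. reflexivity.
Qed.

Lemma nil_decay r : 0 < r -> exists K, 0 <= K /\
    forall n x, nnorm (Nat.iter n T (sp_nil x)) <= K * r ^ n * nnorm x.
Proof.
  intro hr. pose proof gdinv_blin.
  assert (hqT : is_blin V V (fun v => nsub (T v) (T (T (t v))))) by blin.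
  destruct (geom_decay_of_qnil _ hqT t_qnil r hr) as [K [hK hb]].
  destruct (blin_bnd _ sp_nil_blin) as [c [hc bc]].
  exists (K * c). split; [apply Rmult_le_pos; auto|]. intros n x.
  rewrite iter_on_nil. eapply Rle_trans; [apply hb|].
  pose proof (pow_le r n ltac:(lra)). pose proof (bc x).
  replace (K * c * r ^ n * nnorm x) with (K * r ^ n * (c * nnorm x)) by ring.
  apply Rmult_le_compat_l; [apply Rmult_le_pos|]; auto.
Qed.
End SpectralIdempotents.

Lemma decay_product {U V W : NS} {HU : Ban U} {HV : Ban V}
  (f : nat -> V -> W) (g : nat -> U -> V) (K1 K2 s t : R) :
  0 <= K1 -> 0 <= K2 -> 0 <= s -> 0 <= t -> s * t <= / 2 ->
  (forall n y, nnorm (f n y) <= K1 * s ^ n * nnorm y) ->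
  (forall n x, nnorm (g n x) <= K2 * t ^ n * nnorm x) ->
  forall n x, nnorm (f n (g n x)) <= K1 * K2 * (/ 2) ^ n * nnorm x.
Proof.
  intros hK1 hK2 hs ht hst bf bg n x.
  eapply Rle_trans; [apply bf|]. pose proof (norm_ge0 x).
  pose proof (pow_le s n hs). pose proof (pow_le t n ht).
  assert (hp : (s * t) ^ n <= (/ 2) ^ n) by (apply pow_incr; split; [nra | auto]).
  rewrite Rpow_mult_distr in hp.
  apply Rle_trans with (K1 * s ^ n * (K2 * t ^ n * nnorm x)).
  { apply Rmult_le_compat_l; [apply Rmult_le_pos|]; auto. }
  replace (K1 * s ^ n * (K2 * t ^ n * nnorm x)) with (K1 * K2 * (s ^ n * t ^ n) * nnorm x)
    by ring.
  apply Rmult_le_compat_r; auto. apply Rmult_le_compat_l; [apply Rmult_le_pos|]; auto.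
Qed.

Lemma compensating_rate c : 0 <= c -> 0 < / (2 * (c + 1)) /\ c * / (2 * (c + 1)) <= / 2.
Proof.
  intro hc. split; [apply Rinv_0_lt_compat; lra|].
  apply Rmult_le_reg_r with (2 * (c + 1)); [lra|].
  rewrite Rmult_assoc, Rinv_l by lra. field_simplify; lra.
Qed.

(* Lower triangular operators [[A, 0], [C, D]]: with a, d the g-Drazin
   inverses of A and D, the g-Drazin inverse is [[a, 0], [S, d]] where S
   solves two coupled Sylvester equations.  S is assembled from the two
   series Z1 = sum d^(n+2) C pi_A A^n and Z2 = sum pi_D D^n C a^(n+2). *)
Section LowerTriangular.
#[local] Set Default Proof Using "All".
Context {X Y : NS} {HX : Ban X} {HY : Ban Y}.
Variables (A : X -> X) (C : X -> Y) (D : Y -> Y) (a : X -> X) (d : Y -> Y).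
Hypotheses (hA : is_blin X X A) (hC : is_blin X Y C) (hD : is_blin Y Y D)
  (gA : is_gdinv X A a) (gD : is_gdinv Y D d).

Notation pA := (sp_core A a).
Notation piA := (sp_nil A a).
Notation pD := (sp_core D d).
Notation piD := (sp_nil D d).

(* Z1 = Y1 pi_A, where Y1 = sum_n d^(n+2) C pi_A A^n solves
   Y1 = d^2 C pi_A + d Y1 A; it satisfies D Z1 = d C pi_A + Z1 A. *)
Lemma exists_Z1 : exists Z1 : X -> Y, is_blin X Y Z1 /\
  (forall x, Z1 (pA x) = nzero) /\ (forall x, pD (Z1 x) = Z1 x) /\
  (forall x, D (Z1 x) = nadd (d (C (piA x))) (Z1 (A x))).
Proof.
  pose proof (gdinv_blin A a hA gA) as ha. pose proof (gdinv_blin D d hD gD) as hd.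
  pose proof (sp_nil_blin A a hA gA) as hpiA.
  destruct (blin_bnd d hd) as [cd [hcd bd]], (blin_bnd C hC) as [cC [hcC bC]].
  destruct (compensating_rate cd hcd) as [hr hrate].
  destruct (nil_decay A a hA gA _ hr) as [Ka [hKa decay]].
  destruct (sylvester_solution d A (fun x => d (d (C (piA x)))) (1 * (cd * (cd * (cC * Ka)))) (/ 2))
    as [Y1 [hY1 eY1]]; auto; try lra.
  - blin.
  - repeat apply Rmult_le_pos; lra.
  - apply (decay_product (fun n => Nat.iter n d) (fun n x => d (d (C (piA (Nat.iter n A x)))))
      1 (cd * (cd * (cC * Ka))) cd (/ (2 * (cd + 1)))); try lra.
    + repeat apply Rmult_le_pos; auto.
    + intros n y. rewrite Rmult_1_l. apply iter_bnd; auto.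
    + intros n x. rewrite <- (iter_nil A a hA gA).
      eapply Rle_trans; [apply bd|]. rewrite !Rmult_assoc. apply Rmult_le_compat_l; auto.
      eapply Rle_trans; [apply bd|]. apply Rmult_le_compat_l; auto.
      eapply Rle_trans; [apply bC|]. apply Rmult_le_compat_l; auto.
      rewrite <- Rmult_assoc. apply decay.
  -
    assert (core_Y1 : forall w, pD (Y1 w) = Y1 w).
    { intro w. rewrite eY1, (lin_add _ (sp_core_blin D d hD gD)), !(core_inv D d hD gD).
      reflexivity. }
    exists (fun x => Y1 (piA x)). split; [blin|]. split; [|split].
    + intro x. rewrite (nil_core A a hA gA), (lin0 _ hY1). reflexivity.
    + intro x. apply core_Y1.
    + intro x. rewrite eY1, (lin_add _ hD).
      change (D (d (d (C (piA (piA x)))))) with (pD (d (C (piA (piA x))))).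
      change (D (d (Y1 (A (piA x))))) with (pD (Y1 (A (piA x)))).
      rewrite (core_inv D d hD gD), core_Y1, (nil_idem A a hA gA), (op_nil A a hA gA).
      reflexivity.
Qed.

(* Z2 = pi_D Y2 p_A, where Y2 = sum_n D^n pi_D C a^(n+2) solves
   Y2 = pi_D C a^2 + D Y2 a; it satisfies Z2 A = pi_D C a + D Z2. *)
Lemma exists_Z2 : exists Z2 : X -> Y, is_blin X Y Z2 /\
  (forall x, Z2 (pA x) = Z2 x) /\ (forall x, pD (Z2 x) = nzero) /\
  (forall x, Z2 (A x) = nadd (piD (C (a x))) (D (Z2 x))).
Proof.
  pose proof (gdinv_blin A a hA gA) as ha. pose proof (gdinv_blin D d hD gD) as hd.
  pose proof (sp_nil_blin D d hD gD) as hpiD. pose proof (sp_core_blin A a hA gA) as hpA.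
  destruct (blin_bnd a ha) as [ca [hca ba]], (blin_bnd C hC) as [cC [hcC bC]].
  destruct (compensating_rate ca hca) as [hr hrate].
  destruct (nil_decay D d hD gD _ hr) as [Kd [hKd decay]].
  destruct (sylvester_solution D a (fun x => piD (C (a (a x)))) (Kd * (cC * (ca * ca)) * 1) (/ 2))
    as [Y2 [hY2 eY2]]; auto; try lra.
  - blin.
  - repeat apply Rmult_le_pos; lra.
  - apply (decay_product (fun n y => Nat.iter n D (piD (C (a (a y))))) (fun n => Nat.iter n a)
      (Kd * (cC * (ca * ca))) 1 (/ (2 * (ca + 1))) ca); try lra.
    + repeat apply Rmult_le_pos; auto.
    + intros n y. eapply Rle_trans; [apply decay|].
      replace (Kd * (cC * (ca * ca)) * (/ (2 * (ca + 1))) ^ n * nnorm y) with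
        (Kd * (/ (2 * (ca + 1))) ^ n * (cC * (ca * (ca * nnorm y)))) by ring.
      apply Rmult_le_compat_l; [apply Rmult_le_pos; [auto | apply pow_le; lra]|].
      eapply Rle_trans; [apply bC|]. apply Rmult_le_compat_l; auto.
      eapply Rle_trans; [apply ba|]. apply Rmult_le_compat_l; auto.
    + intros n x. rewrite Rmult_1_l. apply iter_bnd; auto.
  -
    exists (fun x => piD (Y2 (pA x))). split; [blin|]. split; [|split].
    + intro x. rewrite (core_idem A a hA gA). reflexivity.
    + intro x. apply (core_nil D d hD gD).
    + intro x. rewrite eY2, (inv_core A a hA gA), (inv_op A a hA gA), (inv_core A a hA gA),
        (lin_add _ hpiD), (nil_idem D d hD gD), (op_nil D d hD gD).
      reflexivity.
Qed.

(* The off-diagonal entry S of the g-Drazin inverse, characterised by the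
   two equations making [[a, 0], [S, d]] an inner inverse commuting with
   [[A, 0], [C, D]]. *)
Lemma exists_offdiag_inverse : exists S : X -> Y, is_blin X Y S /\
  (forall x, nadd (S (pA x)) (nadd (d (C (a x))) (pD (S x))) = S x) /\
  (forall x, nadd (C (a x)) (D (S x)) = nadd (S (A x)) (d (C x))).
Proof.
  pose proof (gdinv_blin A a hA gA) as ha. pose proof (gdinv_blin D d hD gD) as hd.
  pose proof (sp_core_blin D d hD gD) as hpD.
  destruct exists_Z1 as [Z1 [hZ1 [Z1_core [core_Z1 D_Z1]]]].
  destruct exists_Z2 as [Z2 [hZ2 [Z2_core [core_Z2 Z2_A]]]].
  exists (fun x => nsub (nadd (Z1 x) (Z2 x)) (d (C (a x)))). split; [blin|]. split.
  - intro x. rewrite (linB _ hpD), (lin_add _ hpD), Z1_core, Z2_core, core_Z1, core_Z2,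
      (core_inv D d hD gD), (inv_core A a hA gA), add0, add0l, (addKsub (Z1 x)).
    vec_ac.
  - intro x. rewrite (linB _ hD), (lin_add _ hD), D_Z1, Z2_A, (inv_op A a hA gA).
    unfold sp_nil, sp_core. rewrite (linB _ hC), (linB _ hd). vec_ac.
Qed.
End LowerTriangular.

Theorem gd_lowtri {X Y : NS} {HX : Ban X} {HY : Ban Y}
  (A : X -> X) (C : X -> Y) (D : Y -> Y) :
  is_blin X X A -> is_blin X Y C -> is_blin Y Y D ->
  has_gdrazin X A -> has_gdrazin Y D ->
  has_gdrazin (prodNS X Y) (fun p => (A (fst p), nadd (C (fst p)) (D (snd p)))).
Proof.
  intros hA hC hD [a gA] [d gD].
  change (is_gdinv X A a) in gA. change (is_gdinv Y D d) in gD.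
  pose proof (gdinv_blin A a hA gA) as ha. pose proof (gdinv_blin D d hD gD) as hd.
  destruct (exists_offdiag_inverse A C D a d hA hC hD gA gD) as [S [hS [S_inner S_comm]]].
  set (L := (fun p => (A (fst p), nadd (C (fst p)) (D (snd p)))) : prodNS X Y -> prodNS X Y).
  set (Linv := (fun p => (a (fst p), nadd (S (fst p)) (d (snd p)))) : prodNS X Y -> prodNS X Y).
  assert (hL : is_blin _ _ L) by (unfold L; blin).
  assert (hLinv : is_blin _ _ Linv) by (unfold Linv; blin).
  exists Linv. split; [exact hLinv|]. split; [|split].
  - intros [x y]. unfold L, Linv; simpl. f_equal; [apply (t_inner A a hA gA)|].
    rewrite (lin_add _ hd), (lin_add _ hD), (lin_add _ hd), (t_inner D d hD gD),
      <- (t_comm D d hD gD).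
    change (D (d (S x))) with (sp_core D d (S x)).
    change (A (a x)) with (sp_core A a x).
    rewrite (addA (d (C (a x)))), addA, S_inner. reflexivity.
  - intros [x y]. unfold L, Linv; simpl. f_equal; [apply (t_comm A a hA gA)|].
    rewrite (lin_add _ hD), (lin_add _ hd), (t_comm D d hD gD), !addA, S_comm. reflexivity.
  - (* L - L^2 Linv is triangular with the quasinilpotent parts of A and D
       on its diagonal *)
    apply qnil_of_geom_decay.
    apply (geom_decay_lowtri _ (fun x => nsub (A x) (A (A (a x))))
             (fun y => nsub (D y) (D (D (d y))))).
    + unfold L, Linv. blin.
    + blin.
    + blin.
    + reflexivity.
    + intro y. unfold L, Linv; simpl.
      rewrite (lin0 _ ha), (lin0 _ hS), (lin0 _ hA), (lin0 _ hC), !add0l. reflexivity.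
    + apply geom_decay_of_qnil; [blin | apply (t_qnil A a hA gA)].
    + apply geom_decay_of_qnil; [blin | apply (t_qnil D d hD gD)].
Qed.

(* By Cline's
   formula applied to a + b = S R with R z = (a z, z), S (u, v) = u + b v, it
   suffices that R S = [[a, 0], [1, b]] has one, which is lower triangular. *)
Lemma gd_add_of_mul_zero {V : NS} {HV : Ban V} (a b : V -> V) :
  is_blin V V a -> is_blin V V b -> has_gdrazin V a -> has_gdrazin V b ->
  (forall v, a (b v) = nzero) -> has_gdrazin V (fun v => nadd (a v) (b v)).
Proof.
  intros ha hb ga gb hab.
  apply (gd_cline (W := prodNS V V) (fun w => nadd (fst w) (b (snd w))) (fun v => (a v, v)));
    [blin | blin|].
  apply gd_ext with (fun w : prodNS V V => (a (fst w), nadd (fst w) (b (snd w)))).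
  { intros [u v]; simpl. rewrite (lin_add _ ha), hab, add0. reflexivity. }
  apply (gd_lowtri a (fun u => u) b); auto. blin.
Qed.

Definition sum_block {V : NS} (p q : V -> V) : prodNS V V -> prodNS V V :=
  fun w => (q (p (snd w)), nadd (fst w) (p (snd w))).

(* If q^2 p = 0, then p + q has a g-Drazin inverse as soon as q and the
   block [[0, q p], [1, p]] have one: by Cline's formula (factoring through
   V (+) V as above), it reduces to [[q, 0], [0, 0]] + sum_block p q, a sum
   with vanishing product. *)
Lemma gd_add_of_sq_mul_zero {V : NS} {HV : Ban V} (p q : V -> V) :
  is_blin V V p -> is_blin V V q -> has_gdrazin V q ->
  (forall v, q (q (p v)) = nzero) -> has_gdrazin (prodNS V V) (sum_block p q) ->
  has_gdrazin V (fun v => nadd (p v) (q v)).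
Proof.
  intros hp hq gq hqqp gblock.
  apply gd_ext with (fun v => nadd (q v) (p v)); [intro; apply addC|].
  apply (gd_cline (W := prodNS V V) (fun w => nadd (fst w) (p (snd w))) (fun v => (q v, v)));
    [blin | blin|].
  apply gd_ext with (fun w : prodNS V V => nadd ((q (fst w), nzero) : prodNS V V) (sum_block p q w)).
  { intros [u v]. unfold sum_block; simpl. rewrite (lin_add _ hq), add0l. reflexivity. }
  apply gd_add_of_mul_zero.
  - blin.
  - unfold sum_block. blin.
  -
    apply gd_ext with (fun w : prodNS V V => (q (fst w), nadd nzero nzero)).
    { intros w. rewrite add0. reflexivity. }
    apply (gd_lowtri q (fun _ => nzero) (fun _ => nzero)); [auto | blin | blin | auto | apply gd_zero].
  - exact gblock.
  - intros [u v]. unfold sum_block; simpl. rewrite hqqp. reflexivity.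
Qed.

Section OperatorMatrices.
Context {X Y : NS} {HX : Ban X} {HY : Ban Y}.

Definition row_op (A : X -> X) (B : Y -> X) : prodNS X Y -> prodNS X Y :=
  fun v => (nadd (A (fst v)) (B (snd v)), nzero).
Definition col_op (C : X -> Y) (D : Y -> Y) : prodNS X Y -> prodNS X Y :=
  fun v => (nzero, nadd (C (fst v)) (D (snd v))).

Variables (A : X -> X) (B : Y -> X) (C : X -> Y) (D : Y -> Y).
Hypotheses (hA : is_blin X X A) (hB : is_blin Y X B) (hC : is_blin X Y C) (hD : is_blin Y Y D).

Lemma row_op_blin : is_blin _ _ (row_op A B).
Proof. unfold row_op. blin. Qed.
Lemma col_op_blin : is_blin _ _ (col_op C D).
Proof. unfold col_op. blin. Qed.

(* [[A, B], [0, 0]] = (x |-> (x, 0)) o [A B], and [A B] o (x |-> (x, 0)) = A. *)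
Lemma gd_row_op : has_gdrazin X A -> has_gdrazin _ (row_op A B).
Proof.
  intro gA. apply (gd_cline (fun x : X => (x, nzero) : prodNS X Y)
                     (fun v : prodNS X Y => nadd (A (fst v)) (B (snd v)))); [blin | blin|].
  apply gd_ext with A; [|exact gA]. intro x; simpl. rewrite (lin0 _ hB), add0. reflexivity.
Qed.

(* [[0, 0], [C, D]] = (y |-> (0, y)) o [C D], and [C D] o (y |-> (0, y)) = D. *)
Lemma gd_col_op : has_gdrazin Y D -> has_gdrazin _ (col_op C D).
Proof.
  intro gD. apply (gd_cline (fun y : Y => (nzero, y) : prodNS X Y)
                     (fun v : prodNS X Y => nadd (C (fst v)) (D (snd v)))); [blin | blin|].
  apply gd_ext with D; [|exact gD]. intro y; simpl. rewrite (lin0 _ hC), add0l. reflexivity.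
Qed.

(* [[A, B], [C, 0]] = [[0, 0], [C, 0]] + [[A, B], [0, 0]]; here q^2 p = 0
   because ABC = 0, and the attached block is nilpotent of order 4 because
   CBC = 0. *)
Lemma gd_M0 : has_gdrazin X A ->
  (forall x, A (B (C x)) = nzero) -> (forall x, C (B (C x)) = nzero) ->
  has_gdrazin (prodNS X Y) (fun v => (nadd (A (fst v)) (B (snd v)), C (fst v))).
Proof.
  intros gA hABC hCBC.
  apply gd_ext with (fun v => nadd ((nzero, C (fst v)) : prodNS X Y) (row_op A B v)).
  { intros [x y]. unfold row_op; simpl. rewrite add0, add0l. reflexivity. }
  apply (gd_add_of_sq_mul_zero (fun v : prodNS X Y => (nzero, C (fst v)) : prodNS X Y) (row_op A B)).
  - blin.
  - apply row_op_blin.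
  - apply gd_row_op; auto.
  - intros [x y]. unfold row_op; simpl.
    rewrite (lin0 _ hA), add0l, hABC, (lin0 _ hB), add0. reflexivity.
  - apply (gd_nilpotent _ 4); [unfold sum_block, row_op; blin|].
    intros [[x1 x2] [y1 y2]]. unfold sum_block, row_op; simpl.
    repeat first [rewrite (lin0 _ hA) | rewrite (lin0 _ hB) | rewrite add0 | rewrite add0l
                 | rewrite hCBC]. reflexivity.
Qed.

(* The same operator written on Y (+) X: [[0, C], [B, A]]. *)
Lemma gd_M0_swapped : has_gdrazin X A ->
  (forall x, A (B (C x)) = nzero) -> (forall x, C (B (C x)) = nzero) ->
  has_gdrazin (prodNS Y X) (fun z => (C (snd z), nadd (B (fst z)) (A (snd z)))).
Proof.
  intros gA hABC hCBC.
  apply (gd_retract _ (fun v : prodNS X Y => (snd v, fst v) : prodNS Y X)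
                      (fun z : prodNS Y X => (snd z, fst z) : prodNS X Y));
    [blin | blin | blin | intros [y x]; reflexivity|].
  apply gd_ext with (fun v => (nadd (A (fst v)) (B (snd v)), C (fst v)) : prodNS X Y).
  { intros [x y]; simpl. rewrite addC. reflexivity. }
  apply gd_M0; auto.
Qed.

(* It
   factors as S R through (X (+) Y) (+) X, with R (u, v) = (u, A v1 + B v2);
   in the coordinates X (+) (Y (+) X), R S is lower triangular with diagonal
   entries 0 and [[0, C], [B, A]]. *)
Lemma gd_main_block : has_gdrazin X A ->
  (forall x, A (B (C x)) = nzero) -> (forall x, C (B (C x)) = nzero) ->
  has_gdrazin _ (sum_block (row_op A B) (col_op C D)).
Proof.
  intros gA hABC hCBC.
  set (S := fun r : prodNS (prodNS X Y) X =>
              (((nzero, C (snd r)) : prodNS X Y), nadd (fst r) ((snd r, nzero) : prodNS X Y))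
              : prodNS (prodNS X Y) (prodNS X Y)).
  set (R := fun w : prodNS (prodNS X Y) (prodNS X Y) =>
              (fst w, nadd (A (fst (snd w))) (B (snd (snd w)))) : prodNS (prodNS X Y) X).
  assert (hS : is_blin _ _ S) by (unfold S; blin).
  assert (hR : is_blin _ _ R) by (unfold R; blin).
  apply gd_ext with (fun w => S (R w)).
  { intros [u [x y]]. unfold S, R, sum_block, row_op, col_op; simpl.
    rewrite (lin0 _ hD), !add0. reflexivity. }
  apply (gd_cline S R); auto.
  apply (gd_retract _ (fun z : prodNS X (prodNS Y X) => ((fst z, fst (snd z)), snd (snd z))
                         : prodNS (prodNS X Y) X)
                      (fun r : prodNS (prodNS X Y) X => (fst (fst r), (snd (fst r), snd r))
                         : prodNS X (prodNS Y X)));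
    [blin | blin | blin | intros [[x y] w]; reflexivity|].
  apply gd_ext with (fun z : prodNS X (prodNS Y X) =>
    (nzero, nadd ((nzero, A (fst z)) : prodNS Y X)
                 ((C (snd (snd z)), nadd (B (fst (snd z))) (A (snd (snd z)))) : prodNS Y X))).
  { intros [x [y w]]. unfold S, R; simpl.
    rewrite add0, add0l, (lin_add _ hA). f_equal. f_equal. vec_ac. }
  apply (gd_lowtri (fun _ : X => nzero) (fun x : X => (nzero, A x) : prodNS Y X)
                   (fun z : prodNS Y X => (C (snd z), nadd (B (fst z)) (A (snd z))) : prodNS Y X));
    [blin | blin | blin | apply gd_zero | apply gd_M0_swapped; auto].
Qed.
End OperatorMatrices.

Theorem corollary3p9 (X Y : NS) (HX : is_cbanach X) (HY : is_cbanach Y)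
  (A : X -> X) (B : Y -> X) (C : X -> Y) (D : Y -> Y)
  (hA : is_blin X X A) (hB : is_blin Y X B) (hC : is_blin X Y C) (hD : is_blin Y Y D)
  (gA : has_gdrazin X A) (gD : has_gdrazin Y D)
  (hABC : forall x : X, A (B (C x)) = nzero)
  (hCBC : forall x : X, C (B (C x)) = nzero)
  (hDCA : forall x : X, D (C (A x)) = nzero)
  (hDCB : forall y : Y, D (C (B y)) = nzero) :
  has_gdrazin (prodNS X Y) (opmat A B C D).
Proof.
  change (Ban X) in HX. change (Ban Y) in HY.
  (* M = p + q with p = [[A, B], [0, 0]] and q = [[0, 0], [C, D]] *)
  apply gd_ext with (fun v => nadd (row_op A B v) (col_op C D v)).
  { intros [x y]. unfold row_op, col_op, opmat; simpl. rewrite add0, add0l. reflexivity. }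
  apply gd_add_of_sq_mul_zero.
  - apply row_op_blin; auto.
  - apply col_op_blin; auto.
  - apply gd_col_op; auto.
  - (* q^2 p = [[0, 0], [DCA, DCB]] = 0 *)
    intros [x y]. unfold row_op, col_op; simpl.
    rewrite (lin0 _ hD), !add0, (lin0 _ hC), add0l, (lin_add _ hC), (lin_add _ hD), hDCA, hDCB, add0.
    reflexivity.
  - apply gd_main_block; auto.
Qed.
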